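(* Let $X$ be a Banach space, $C\subset X$ a nonempty generalized polyhedral convex set, and $f:X\to\mathbb R$ twice continuously Fréchet differentiable on $X$. If $\bar x$ is a local minimum of $\min\{f(x)\mid x\in C\}$, then: (c0) $\langle\nabla f(\bar x),v\rangle\ge0$ for all $v\in T_C(\bar x)$; (c1) for every $v\in T_C(\bar x)$ with $\langle\nabla f(\bar x),v\rangle=0$, one has $\langle\nabla f(\bar x),w\rangle\ge0$ for all $w\in T^2_C(\bar x,v)$; (c2) $\langle\nabla^2 f(\bar x)v,v\rangle\ge0$ for all $v\in T_C(\bar x)$ with $\langle\nabla f(\bar x),v\rangle=0$. *)

From HB Require Import structures.
From mathcomp Require Import all_boot all_order all_algebra.
From mathcomp Require Import all_classical all_reals all_analysis.
Set Implicit Arguments. Unset Strict Implicit. Unset Printing Implicit Defensive.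
Import Order.TTheory GRing.Theory Num.Theory.
Import numFieldNormedType.Exports.
Local Open Scope classical_set_scope.
Local Open Scope ring_scope.

Section Defs.
Context {R : realType} {X : completeNormedModType R}.

Definition closed_affine_subspace (L : set X) : Prop :=
  exists (x0 : X) (L0 : set X),
    [/\ L0 0, (forall (a : R) (u v : X), L0 u -> L0 v -> L0 (a *: u + v)),
        closed L0 & L = [set x0 + y | y in L0]].

Definition gen_polyhedral (C : set X) : Prop :=
  exists (m : nat) (xs : 'I_m -> X -> R) (alpha : 'I_m -> R) (L : set X),
    [/\ (forall i, forall (a : R) (u v : X), xs i (a *: u + v) = a * xs i u + xs i v),
        (forall i, continuous (xs i)),
        closed_affine_subspace L &
        C = L `&` [set x | forall i, xs i x <= alpha i]].

Definition tangent_cone (C : set X) (xb : X) : set X :=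
  [set v | exists (t : nat -> R) (vn : nat -> X),
     [/\ (forall n, 0 < t n), t @ \oo --> 0, vn @ \oo --> v &
         forall n, C (xb + t n *: vn n)]].

Definition second_tangent_set (C : set X) (xb v : X) : set X :=
  [set w | exists (t : nat -> R) (wn : nat -> X),
     [/\ (forall n, 0 < t n), t @ \oo --> 0, wn @ \oo --> w &
         forall n, C (xb + t n *: v + (t n ^+ 2 / 2) *: wn n)]].

(* f is twice continuously Frechet differentiable on X, with second
   Frechet derivative D2f (D2f x h k = <nabla^2 f(x) h, k>):
   - f is Frechet differentiable everywhere (first derivative 'd f x);
   - D2f x is a bounded bilinear form;
   - x |-> 'd f x is Frechet differentiable in operator norm with derivative D2f x;
   - x |-> D2f x is continuous in the operator norm. *)
Definition twice_cont_frechet (f : X -> R) (D2f : X -> X -> X -> R) : Prop :=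
  [/\ forall x, differentiable f x,
      forall x, (forall (a : R) (h1 h2 k : X),
                   D2f x (a *: h1 + h2) k = a * D2f x h1 k + D2f x h2 k) /\
                (forall (a : R) (h k1 k2 : X),
                   D2f x h (a *: k1 + k2) = a * D2f x h k1 + D2f x h k2),
      forall x, exists M : R, forall h k, `|D2f x h k| <= M * `|h| * `|k|,
      forall x (eps : R), 0 < eps -> exists2 delta : R, 0 < delta &
        forall h, `|h| < delta -> forall k,
          `|'d f (x + h) k - 'd f x k - D2f x h k| <= eps * `|h| * `|k| &
      forall x (eps : R), 0 < eps -> exists2 delta : R, 0 < delta &
        forall y, `|y - x| < delta -> forall h k,
          `|D2f y h k - D2f x h k| <= eps * `|h| * `|k| ].

Definition local_min_on (f : X -> R) (C : set X) (xb : X) : Prop :=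
  C xb /\ \forall x \near xb, C x -> f xb <= f x.

End Defs.

(* Call d a feasible direction at xb when
     xb + t d stays in C for all small t > 0.  If xb is a local minimizer on C
     and d is feasible, then t |-> f (xb + t d) cannot have a negative
     derivative for all small t > 0 (mean value theorem).  The second-order
     Taylor bound on the derivative 'd f (xb + s d) d then yields
     'd f xb d >= 0, and D2f xb d d >= 0 whenever 'd f xb d = 0.
   - Geometry of polyhedra.  For C = L /\ {x | xs_i x <= alpha_i}, every
     tangent vector v lies in the linearized cone (v in L0, xs_i v <= 0 for the
     active i), and every vector of that cone is a feasible direction.
     Similarly, if w is a second-order tangent vector for v, then v + s w is
     in the linearized cone for some s > 0.
   The theorem follows: (c0) and (c2) apply the calculus half to v, and (c1)
   applies (c0) to v + s w and uses 'd f xb v = 0. *)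
From HB Require Import structures.
From mathcomp Require Import all_boot all_order all_algebra.
From mathcomp Require Import all_classical all_reals all_analysis.
From mathcomp Require Import lra.
Set Implicit Arguments. Unset Strict Implicit. Unset Printing Implicit Defensive.
Import Order.TTheory GRing.Theory Num.Theory.
Import numFieldNormedType.Exports.
Local Open Scope classical_set_scope.
Local Open Scope ring_scope.

Section LinearForm.
Context {R : pzRingType} {V : lmodType R}.

Definition linear_form (l : V -> R) : Prop :=
  forall (a : R) (u v : V), l (a *: u + v) = a * l u + l v.

Lemma linear_form0 (l : V -> R) : linear_form l -> l 0 = 0.
Proof.
move=> lin; have := lin 1 0 0; rewrite scale1r addr0 mul1r => l00.
by apply: (addrI (l 0)); rewrite addr0 -l00.
Qed.

Lemma linear_formZ (l : V -> R) (a : R) (u : V) :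
  linear_form l -> l (a *: u) = a * l u.
Proof. by move=> lin; have := lin a u 0; rewrite !addr0 (linear_form0 lin) addr0. Qed.

End LinearForm.

Section RealLine.
Context {R : realType}.

Lemma near_right_affine_le (a b c : R) :
  a <= b -> (a = b -> c <= 0) -> \forall t \near 0^'+, a + t * c <= b.
Proof.
rewrite le_eqVlt => /orP [/eqP ab c0 | ab _].
  apply: filterS (nbhs_right_gt 0) => t t0.
  by rewrite -ab gerDl pmulr_rle0 // c0.
have c1 : 0 < `|c| + 1 by rewrite ltr_wpDl.
have gap : 0 < (b - a) / (`|c| + 1) by rewrite divr_gt0 // subr_gt0.
apply: filterS2 (nbhs_right_gt 0) (nbhs_right_lt gap) => t t0 tgap.
have tc : t * c <= t * (`|c| + 1).
  by rewrite ler_pM2l // (le_trans (ler_norm c)) // lerDl.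
have : t * (`|c| + 1) < b - a by rewrite -ltr_pdivlMr.
lra.
Qed.

Lemma near_right_decrease (g g' : R -> R) :
  (forall s : R, is_derive s (1 : R) g (g' s)) -> (\forall s \near 0^'+, g' s < 0) ->
  \forall t \near 0^'+, g t < g 0.
Proof.
move=> dg /nbhs_ballP [del del0 neg].
apply: filterS2 (nbhs_right_gt 0) (nbhs_right_lt del0) => t t0 tdel.
have gcont : {within `[0, t], continuous g}.
  apply: continuous_subspaceT => x; apply: differentiable_continuous.
  by apply/derivable1_diffP; have [] := dg x.
have [c] := MVT t0 (fun x _ => dg x) gcont.
rewrite in_itv /= => /andP [c0 ct] mvt.
rewrite -subr_lt0 mvt subr0 pmulr_llt0 //; apply: neg => //.
by rewrite /ball /= sub0r normrN gtr0_norm ?(lt_trans ct).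
Qed.

End RealLine.

Section SegmentCalculus.
Context {R : realType} {X : completeNormedModType R}.
Implicit Types (f : X -> R) (C : set X) (xb d : X).

Definition feasible C xb d : Prop := \forall t \near 0^'+, C (xb + t *: d).

Lemma is_derive_line f xb d (t : R) :
  differentiable f (xb + t *: d) ->
  is_derive t 1 (fun s : R => f (xb + s *: d)) ('d f (xb + t *: d) d).
Proof.
move=> df.
have quotient : (fun h : R => h^-1 *: (((fun s => f (xb + s *: d)) \o shift t) (h *: 1)
      - f (xb + t *: d)))
  = (fun h : R => h^-1 *: ((f \o shift (xb + t *: d)) (h *: d) - f (xb + t *: d))).
  apply: funext => h /=.
  by rewrite /shift /= [h *: 1]mulr1 scalerDl addrCA.
constructor; first by rewrite /derivable quotient; exact: diff_derivable.
by rewrite /derive quotient; exact: deriveE.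
Qed.

Lemma local_min_along f C xb d : local_min_on f C xb -> feasible C xb d ->
  \forall t \near 0^'+, f xb <= f (xb + t *: d).
Proof.
move=> [_ fmin] Fd.
have line : (fun t : R => xb + t *: d) @ 0 --> xb.
  rewrite -{2}[xb]addr0 -(scale0r d).
  apply: cvgD; first exact: cvg_cst.
  by apply: cvgZ; [exact: cvg_id | exact: cvg_cst].
have near0 : \forall t \near 0, C (xb + t *: d) -> f xb <= f (xb + t *: d).
  exact: line _ fmin.
by apply: filterS2 Fd (cvg_within _ near0) => t Ct; apply.
Qed.

Lemma no_feasible_descent f C xb d :
  local_min_on f C xb -> (forall x, differentiable f x) -> feasible C xb d ->
  ~ (\forall s \near 0^'+, 'd f (xb + s *: d) d < 0).
Proof.
move=> fmin fdiff Fd neg.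
have below := near_right_decrease (fun s => is_derive_line (fdiff _)) neg.
apply: (@filter_const _ (0 : R)^'+); apply: filterS2 below (local_min_along fmin Fd).
by rewrite scale0r addr0 => t /lt_geF ->.
Qed.

Lemma directional_derivative_bound f D2f xb d (eps : R) :
  twice_cont_frechet f D2f -> 0 < eps ->
  \forall s \near 0^'+,
    'd f (xb + s *: d) d <= 'd f xb d + s * D2f xb d d + eps * s * (`|d| * `|d|).
Proof.
move=> [_ bilin _ taylor _] eps0.
have [del del0 close] := taylor xb eps eps0.
have d1 : 0 < `|d| + 1 by rewrite ltr_wpDl.
apply: filterS2 (nbhs_right_gt 0) (nbhs_right_lt (divr_gt0 del0 d1)) => s s0 sdel.
have small : `|s *: d| < del.
  rewrite normrZ gtr0_norm // (le_lt_trans (y := s * (`|d| + 1))) //.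
    by rewrite ler_pM2l // lerDl.
  by rewrite -ltr_pdivlMr.
have := close _ small d.
rewrite (linear_formZ (l := fun h => D2f xb h d)) => [|a u v]; last exact: (bilin xb).1.
rewrite normrZ gtr0_norm // => /ler_normlW.
rewrite lerBlDr lerBlDr -!mulrA; lra.
Qed.

Lemma first_order_feasible f D2f C xb d : twice_cont_frechet f D2f ->
  local_min_on f C xb -> feasible C xb d -> 0 <= 'd f xb d.
Proof.
move=> Hf fmin Fd; rewrite leNgt; apply/negP => a0.
apply: (no_feasible_descent fmin _ Fd); first by case: Hf.
set a := 'd f xb d in a0 *; set c := D2f xb d d; set q := `|d| * `|d|.
have q0 : 0 <= q by rewrite mulr_ge0.
have K : 0 < `|c| + q + 1 by rewrite ltr_wpDl // addr_ge0.
have small : 0 < - a / (`|c| + q + 1) by rewrite divr_gt0 ?oppr_gt0.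
have bound := directional_derivative_bound xb d Hf ltr01.
apply: filterS3 bound (nbhs_right_gt 0) (nbhs_right_lt small).
move=> s sb s0; rewrite ltr_pdivlMr // => sa; apply: (le_lt_trans sb).
have : s * c <= s * `|c| by rewrite ler_pM2l // ler_norm.
rewrite !mulrDr mulr1 in sa; rewrite mul1r -/a -/c -/q; lra.
Qed.

Lemma second_order_feasible f D2f C xb d : twice_cont_frechet f D2f ->
  local_min_on f C xb -> feasible C xb d -> 'd f xb d = 0 -> 0 <= D2f xb d d.
Proof.
move=> Hf fmin Fd a0; rewrite leNgt; apply/negP => c0.
apply: (no_feasible_descent fmin _ Fd); first by case: Hf.
set c := D2f xb d d in c0 *; set q := `|d| * `|d|.
have q0 : 0 <= q by rewrite mulr_ge0.
have K : 0 < 2 * (q + 1) by rewrite mulr_gt0 // ltr_wpDl.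
set eps := - c / (2 * (q + 1)).
have eps0 : 0 < eps by rewrite divr_gt0 ?oppr_gt0.
have epsK : eps * (2 * (q + 1)) = - c by rewrite divfK ?gt_eqF.
apply: filterS2 (directional_derivative_bound xb d Hf eps0) (nbhs_right_gt 0).
move=> s sb s0; apply: (le_lt_trans sb); rewrite a0 -/c -/q add0r.
have : s * eps * (2 * (q + 1)) = s * - c by rewrite -mulrA epsK.
have : 0 < s * eps by rewrite mulr_gt0.
nra.
Qed.

End SegmentCalculus.

Section Polyhedron.
Context {R : realType} {X : completeNormedModType R}.
Variables (m : nat) (xs : 'I_m -> X -> R) (alpha : 'I_m -> R) (x0 : X) (L0 : set X).
Hypothesis xs_linear : forall i, linear_form (xs i).
Hypothesis xs_cont : forall i, continuous (xs i).
Hypothesis L0_0 : L0 0.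
Hypothesis L0_lin : forall (a : R) (u v : X), L0 u -> L0 v -> L0 (a *: u + v).
Hypothesis L0_closed : closed L0.

Let L := [set x0 + y | y in L0].
Let C := L `&` [set x | forall i, xs i x <= alpha i].

Definition linearized_cone (xb : X) : set X :=
  [set d | L0 d /\ forall i, xs i xb = alpha i -> xs i d <= 0].

Definition second_linearized_set (xb v : X) : set X :=
  [set w | L0 w /\ forall i, xs i xb = alpha i -> xs i v = 0 -> xs i w <= 0].

Lemma L0Z (a : R) (u : X) : L0 u -> L0 (a *: u).
Proof. by move=> L0u; rewrite -[_ *: _]addr0; apply: L0_lin. Qed.

Lemma L0D (u v : X) : L0 u -> L0 v -> L0 (u + v).
Proof. by move=> L0u L0v; rewrite -[u]scale1r; apply: L0_lin. Qed.

Lemma L0B (u v : X) : L0 u -> L0 v -> L0 (u - v).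
Proof. by move=> L0u L0v; rewrite -scaleN1r; apply: L0D => //; apply: L0Z. Qed.

Lemma L0_unscale (t : R) (u : X) : t != 0 -> L0 (t *: u) -> L0 u.
Proof. by move=> t0 /(L0Z t^-1); rewrite scalerA mulVf // scale1r. Qed.

Lemma inL (z : X) : L z <-> L0 (z - x0).
Proof.
split; first by move=> [y L0y <-]; rewrite addrC addKr.
by move=> L0z; exists (z - x0) => //; rewrite addrC subrK.
Qed.

Lemma L_step (xb u : X) : L xb -> L (xb + u) -> L0 u.
Proof.
move=> /inL Lxb /inL Lxbu; have := L0B Lxbu Lxb.
by rewrite opprB addrA subrK addrAC subrr add0r.
Qed.

Lemma xs_along i (xb d : X) (t : R) : xs i (xb + t *: d) = xs i xb + t * xs i d.
Proof. by rewrite addrC xs_linear addrC. Qed.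

Lemma closed_nonpos i : closed [set x | xs i x <= 0].
Proof.
have -> : [set x | xs i x <= 0] = xs i @^-1` [set r : R | r <= 0] by [].
by apply: preimage_closed => [x _|]; [exact: xs_cont | exact: closed_le].
Qed.

Lemma linearized_feasible (xb d : X) :
  C xb -> linearized_cone xb d -> feasible C xb d.
Proof.
move=> [Lxb xbC] [L0d dact].
have ineq : forall i, \forall t \near 0^'+, xs i (xb + t *: d) <= alpha i.
  move=> i; apply: filterS (near_right_affine_le (xbC i) (@dact i)) => t.
  by rewrite xs_along.
apply: filterS (filter_forall _ ineq) => t Ct; split => //.
by apply/inL; rewrite addrAC; apply: L0D (L0Z _ L0d); apply/inL.
Qed.

Lemma tangent_linearized (xb v : X) :
  C xb -> tangent_cone C xb v -> linearized_cone xb v.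
Proof.
move=> [Lxb _] [t [vn [t0 _ vnv Cn]]].
have L0vn n : L0 (vn n).
  exact: L0_unscale (lt0r_neq0 (t0 n)) (L_step Lxb (Cn n).1).
split; first by apply: (closed_cvg _ L0_closed _ _ vnv); exact: nearW.
move=> i act; apply: (closed_cvg _ (@closed_nonpos i) _ _ vnv); apply: nearW => n /=.
by have := (Cn n).2 i; rewrite xs_along act gerDl pmulr_rle0.
Qed.

Lemma second_tangent_linearized (xb v w : X) : C xb -> linearized_cone xb v ->
  second_tangent_set C xb v w -> second_linearized_set xb v w.
Proof.
move=> [Lxb _] [L0v _] [t [wn [t0 _ wnw Cn]]].
have q0 n : 0 < t n ^+ 2 / 2 by rewrite divr_gt0 // exprn_gt0.
have L0wn n : L0 (wn n).
  apply: L0_unscale (lt0r_neq0 (q0 n)) _.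
  have := (Cn n).1; rewrite -addrA => /(L_step Lxb) /L0B /(_ (L0Z (t n) L0v)).
  by rewrite addrAC subrr add0r.
split; first by apply: (closed_cvg _ L0_closed _ _ wnw); exact: nearW.
move=> i act stat; apply: (closed_cvg _ (@closed_nonpos i) _ _ wnw); apply: nearW => n /=.
by have := (Cn n).2 i; rewrite !xs_along act stat mulr0 addr0 gerDl pmulr_rle0.
Qed.

Lemma second_linearized_shift (xb v w : X) : linearized_cone xb v ->
  second_linearized_set xb v w -> exists2 s : R, 0 < s & linearized_cone xb (v + s *: w).
Proof.
move=> [L0v vact] [L0w wact].
have ineq : forall i, \forall s \near 0^'+, xs i xb = alpha i -> xs i (v + s *: w) <= 0.
  move=> i; have [act|inact] := eqVneq (xs i xb) (alpha i); last first.
    by apply: nearW => s act; rewrite act eqxx in inact.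
  apply: filterS (near_right_affine_le (vact i act) (wact i act)) => s vsw _.
  by rewrite xs_along.
have [s [s0 sact]] : exists s : R,
    0 < s /\ forall i, xs i xb = alpha i -> xs i (v + s *: w) <= 0.
  apply: (@filter_ex _ (0 : R)^'+).
  by apply: filterS2 (nbhs_right_gt 0) (filter_forall _ ineq) => s; exact: conj.
by exists s => //; split; [apply: L0D (L0Z _ L0w) | exact: sact].
Qed.

End Polyhedron.

Section GeneralizedPolyhedron.
Context {R : realType} {X : completeNormedModType R}.

Lemma polyhedral_tangent_feasible (C : set X) (xb v : X) :
  gen_polyhedral C -> C xb -> tangent_cone C xb v -> feasible C xb v.
Proof.
move=> [m [xs [alpha [L [xs_lin xs_cont [x0 [L0 [L0_0 L0_lin L0_cl ->]]] ->]]]]].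
move=> Cxb Tv; apply: (linearized_feasible xs_lin L0_0 L0_lin Cxb).
exact: (tangent_linearized xs_lin xs_cont L0_0 L0_lin L0_cl Cxb Tv).
Qed.

Lemma polyhedral_second_tangent_feasible (C : set X) (xb v w : X) :
  gen_polyhedral C -> C xb -> tangent_cone C xb v -> second_tangent_set C xb v w ->
  exists2 s : R, 0 < s & feasible C xb (v + s *: w).
Proof.
move=> [m [xs [alpha [L [xs_lin xs_cont [x0 [L0 [L0_0 L0_lin L0_cl ->]]] ->]]]]].
move=> Cxb Tv Tw.
have Lv := tangent_linearized xs_lin xs_cont L0_0 L0_lin L0_cl Cxb Tv.
have Lw := second_tangent_linearized xs_lin xs_cont L0_0 L0_lin L0_cl Cxb Lv Tw.
have [s s0 Lvsw] := second_linearized_shift xs_lin L0_0 L0_lin Lv Lw.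
by exists s => //; apply: (linearized_feasible xs_lin L0_0 L0_lin Cxb).
Qed.

End GeneralizedPolyhedron.

Theorem theorem3p3 (R : realType) (X : completeNormedModType R)
  (C : set X) (f : X -> R) (D2f : X -> X -> X -> R) (xb : X) :
  C !=set0 -> gen_polyhedral C -> twice_cont_frechet f D2f ->
  local_min_on f C xb ->
  [/\ (forall v, tangent_cone C xb v -> 0 <= 'd f xb v),
      (forall v, tangent_cone C xb v -> 'd f xb v = 0 ->
         forall w, second_tangent_set C xb v w -> 0 <= 'd f xb w) &
      (forall v, tangent_cone C xb v -> 'd f xb v = 0 -> 0 <= D2f xb v v)].
Proof.
move=> _ Cpoly Hf fmin.
have Cxb := fmin.1.
have Fv v : tangent_cone C xb v -> feasible C xb v.
  exact: (polyhedral_tangent_feasible Cpoly Cxb).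
split.
- by move=> v Tv; exact: (first_order_feasible Hf fmin (Fv v Tv)).
- move=> v Tv dv0 w Tw.
  have [s s0 Fvsw] := polyhedral_second_tangent_feasible Cpoly Cxb Tv Tw.
  have := first_order_feasible Hf fmin Fvsw.
  by rewrite linearD linearZ dv0 add0r pmulr_rge0.
- by move=> v Tv dv0; exact: (second_order_feasible Hf fmin (Fv v Tv) dv0).
Qed.
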